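(* Let $N\ge3$. Consider item types: type $(i,7)$ for $1\le i\le N$ with size $\frac1{7^i}$ and weight $\frac1{7^{i-1}}$, and types $j\in\{1,2,3\}$ with size $\frac1j$ and weight $2$. In the arrival order $(N,7),(N-1,7),\dots,(1,7),3,2,1$ (with $1$-items) and $(N,7),\dots,(1,7),3,2$ (without $1$-items), define: $W_i$ (resp. $V_i$) is the maximum total weight of a feasible bin using only items of types that arrive not earlier than type $(i,7)$ in the first (resp. second) order; $A_j$ (resp. $B_j$) is the maximum total weight of a feasible bin using only items of types arriving not earlier than type $j$ in the first (resp. second) order. Then $A_1=2$, $A_2=B_2=4$, $A_3=B_3=6$, and $W_k=V_k=9-\frac1{7^{k-1}}$ for every $1\le k\le N$.
   Context: A feasible bin is a finite multiset of items (each item of one of the listed types, arbitrary multiplicities) such that when the items are arranged according to the arrival order of their types, the total size of all items except the last one is strictly below $1$ (this is the Ordered Open End Bin Packing rule: an item may be added to a bin only while the bin's current total size is strictly below $1$). The weight of a bin is the sum of the weights of its items. Thus ''types arriving not earlier than $(i,7)$'' in the first order are $(i,7),(i-1,7),\dots,(1,7),3,2,1$, and in the second order $(i,7),\dots,(1,7),3,2$. *)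

From HB Require Import structures.
From mathcomp Require Import all_boot all_order all_algebra.
Set Implicit Arguments. Unset Strict Implicit. Unset Printing Implicit Defensive.
Import Order.TTheory GRing.Theory Num.Theory.
Local Open Scope ring_scope.

(* Item types: [T7 i] is type (i,7); [TJ j] is type j (j in {1,2,3}). *)
Inductive itype := T7 of nat | TJ of nat.

Definition code_itype (t : itype) : bool * nat :=
  match t with T7 i => (true, i) | TJ j => (false, j) end.
Definition decode_itype (p : bool * nat) : itype :=
  if p.1 then T7 p.2 else TJ p.2.
Lemma code_itypeK : cancel code_itype decode_itype.
Proof. by case. Qed.
HB.instance Definition _ := Equality.copy itype (can_type code_itypeK).

Definition isize (t : itype) : rat :=
  match t with T7 i => 1 / 7%:R ^+ i | TJ j => 1 / j%:R end.
Definition iweight (t : itype) : rat :=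
  match t with T7 i => 1 / 7%:R ^+ i.-1 | TJ _ => 2 end.

Definition order1 (N : nat) : seq itype :=
  [seq T7 (N - k) | k <- iota 0 N] ++ [:: TJ 3; TJ 2; TJ 1].
Definition order2 (N : nat) : seq itype :=
  [seq T7 (N - k) | k <- iota 0 N] ++ [:: TJ 3; TJ 2].

(* A bin is a finite multiset of items, represented by a list of item types
   (order irrelevant). Arrange it according to the arrival order [ord]. *)
Definition arrange (ord : seq itype) (B : seq itype) : seq itype :=
  sort (fun a b => (index a ord <= index b ord)%N) B.

(* Ordered Open End rule: total size of all items but the last (in arrival
   arrangement) is strictly below 1. *)
Definition feasible (ord : seq itype) (B : seq itype) : Prop :=
  let s := arrange ord B in
  \sum_(x <- take (size s).-1 s) isize x < 1.

Definition bin_weight (B : seq itype) : rat := \sum_(x <- B) iweight x.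

Definition not_earlier (ord : seq itype) (t : itype) : seq itype :=
  drop (index t ord) ord.

Definition admissible (ord : seq itype) (t : itype) (B : seq itype) : Prop :=
  all (fun x => x \in not_earlier ord t) B /\ feasible ord B.

Definition is_max_weight (ord : seq itype) (t : itype) (v : rat) : Prop :=
  (exists B, admissible ord t B /\ bin_weight B = v) /\
  (forall B, admissible ord t B -> bin_weight B <= v).

From HB Require Import structures.
From mathcomp Require Import all_boot all_order all_algebra.
From mathcomp Require Import ring lra zify.
Import Order.TTheory GRing.Theory Num.Theory.
Local Open Scope ring_scope.

(* Arranged in arrival order, a feasible bin is a prefix of total size below 1
   followed by one item of weight at most 2, so the maximum weight is 2 plus the
   largest weight of such a prefix.  With only j-items, j <= m, a prefix holds
   at most m - 1 items of weight 2, and m items of type m attain 2m.  With items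
   (i,7), i <= k, and j-items, measure sizes in units of 7^-k: the 7-items of a
   prefix have integral size n and weight 7n, while each of its c <= 2 j-items
   has size at least 7^k/3 and weight 2 * 7^k.  Then 3n + c 7^k < 3 7^k forces
   7n + 2c 7^k <= 7^(k+1) - 7, i.e. a prefix weighs at most 7 - 7^(1-k); the bin
   of 7^k - 1 items (k,7) closed by a 2-item attains it. *)

Definition prefix_weight_bound (P : pred itype) (b : rat) : Prop :=
  forall p, all P p -> \sum_(x <- p) isize x < 1 -> \sum_(x <- p) iweight x <= b.

Lemma iweight_le2 t : iweight t <= 2.
Proof.
case: t => [i|j] //=; rewrite mul1r (@le_trans _ _ 1) // invf_le1 ?exprn_gt0 //.
exact: exprn_ege1.
Qed.

Lemma admissible_weight_le ord t B P b :
  admissible ord t B -> {subset not_earlier ord t <= P} ->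
  prefix_weight_bound P b -> bin_weight B <= b + 2.
Proof.
move=> [/allP BinP feasB] subP boundP.
have b_ge0 : 0 <= b by have := boundP [::]; rewrite !big_nil; apply.
have permB : perm_eq (arrange ord B) B by rewrite /arrange perm_sort.
have : all P (arrange ord B).
  by apply/allP => x; rewrite (perm_mem permB) => /BinP /subP.
move: feasB; rewrite /feasible /bin_weight -(perm_big _ permB).
case/lastP: (arrange ord B) => [|p x]; first by rewrite !big_nil => _ _; lra.
rewrite size_rcons -cats1 take_size_cat // all_cat big_cat big_seq1 /=.
by move=> sum_p /andP[Pp _]; rewrite lerD ?iweight_le2 ?boundP.
Qed.

Lemma feasible_rcons_nseq ord n a b :
  (index a ord <= index b ord)%N -> n%:R * isize a < 1 ->
  feasible ord (rcons (nseq n a) b).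
Proof.
move=> le_ab sum_lt1.
have sorted_ab :
    sorted (fun x y => index x ord <= index y ord)%N (rcons (nseq n a) b).
  by case: n {sum_lt1} => //= n; elim: n => /= [|n ->]; rewrite ?andbT ?leqnn.
rewrite /feasible /arrange (sorted_sort _ sorted_ab); last first.
  by move=> ? ? ?; apply: leq_trans.
rewrite size_rcons -cats1 take_size_cat ?size_nseq //.
by rewrite big_nseq iter_addr_0 -mulr_natl.
Qed.

Lemma bin_weight_rcons_nseq n a b :
  bin_weight (rcons (nseq n a) b) = n%:R * iweight a + iweight b.
Proof. by rewrite /bin_weight -cats1 big_cat big_seq1 big_nseq iter_addr_0 mulr_natl. Qed.

Lemma is_max_weight_from_bound P b B ord t :
  admissible ord t B -> bin_weight B = b + 2 ->
  {subset not_earlier ord t <= P} -> prefix_weight_bound P b ->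
  is_max_weight ord t (b + 2).
Proof.
move=> admB wB subP boundP; split; first by exists B.
by move=> B' admB'; apply: admissible_weight_le subP boundP.
Qed.

Lemma mem_not_earlier_self ord t : t \in ord -> t \in not_earlier ord t.
Proof. by move=> t_in; rewrite /not_earlier (drop_index t_in) mem_head. Qed.

Lemma not_earlier_head t s : not_earlier (t :: s) t = t :: s.
Proof. by rewrite /not_earlier /= eqxx. Qed.

Lemma not_earlier_cons x s t : x != t -> not_earlier (x :: s) t = not_earlier s t.
Proof. by move=> /negbTE xNt; rewrite /not_earlier /= xNt. Qed.

Definition sevens (N : nat) : seq itype := [seq T7 (N - i) | i <- iota 0 N].

Lemma sevensS k : sevens k.+1 = T7 k.+1 :: sevens k.
Proof. by rewrite /sevens /= subn0 (iotaDl 1 0) -map_comp. Qed.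

Lemma mem_sevens N i : (T7 i \in sevens N) = (0 < i <= N)%N.
Proof.
apply/mapP/idP => [[j] | i_range]; first by rewrite mem_iota => j_lt [->]; lia.
by exists (N - i)%N; [rewrite mem_iota; lia | congr T7; lia].
Qed.

Lemma TJ_notin_sevens N j : TJ j \notin sevens N.
Proof. by apply/mapP => -[]. Qed.

Lemma not_earlier_sevens_TJ N tl j :
  not_earlier (sevens N ++ tl) (TJ j) = not_earlier tl (TJ j).
Proof. by elim: N => // N IHN; rewrite sevensS cat_cons not_earlier_cons. Qed.

Lemma not_earlier_sevens_T7 N tl k : (0 < k <= N)%N ->
  not_earlier (sevens N ++ tl) (T7 k) = sevens k ++ tl.
Proof.
case/andP=> k_gt0; elim: N => [|N IHN]; first by rewrite leqNgt k_gt0.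
rewrite leq_eqVlt ltnS => /orP[/eqP-> | k_le_N].
  by rewrite sevensS cat_cons not_earlier_head.
rewrite sevensS cat_cons not_earlier_cons ?IHN //.
by apply/eqP => -[]; lia.
Qed.

(* [j > 0] matters: [isize (TJ 0)] is [1 / 0 = 0]. *)
Definition jtype (m : nat) (t : itype) : bool :=
  if t is TJ j then (0 < j <= m)%N else false.

Lemma prefix_weight_bound_jtype m :
  prefix_weight_bound (jtype m) (2 * m.-1)%:R.
Proof.
move=> p /allP jp sum_lt1.
have -> : \sum_(x <- p) iweight x = (size p)%:R * 2.
  rewrite (eq_big_seq (fun=> 2)); last by move=> x /jp; case: x.
  by rewrite big_const_seq count_predT iter_addr_0 mulr_natl.
have count_le : (size p)%:R <= m%:R * \sum_(x <- p) isize x.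
  rewrite -sum1_size natr_sum mulr_sumr !big_seq ler_sum // => x /jp.
  case: x => // j /andP[j_gt0 j_le_m] /=.
  by rewrite mul1r ler_pdivlMr ?ltr0n // mul1r ler_nat.
have : (size p <= m.-1)%N.
  case: m {jp} count_le => [|m] count_le.
    by rewrite -(ler_nat rat); rewrite mul0r in count_le.
  rewrite -ltnS -(ltr_nat rat) (le_lt_trans count_le) //.
  by rewrite -[X in _ < X]mulr1 ltr_pM2l ?ltr0n.
by rewrite natrM mulrC ler_pM2l // ler_nat.
Qed.

Definition small_type (k : nat) (t : itype) : bool :=
  if t is T7 i then (0 < i <= k)%N else jtype 3 t.

Definition is_jtype (t : itype) : bool := if t is TJ _ then true else false.

(* The size of [T7 i] in units of [7 ^ -k]. *)
Definition size_units (k : nat) (t : itype) : nat :=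
  if t is T7 i then 7 ^ (k - i) else 0.

Lemma small_type_scaled k t : small_type k t ->
  3 * (size_units k t)%:R + (is_jtype t)%:R * 7%:R ^+ k <= 3 * 7%:R ^+ k * isize t /\
  7%:R ^+ k * iweight t = 7 * (size_units k t)%:R + 2 * (is_jtype t)%:R * 7%:R ^+ k.
Proof.
case: t => [[|i]|j] /andP[] //= => [_ i_lt_k | j_gt0 j_le3].
  have split_k : 7%:R ^+ k = 7%:R ^+ (k - i.+1) * 7%:R ^+ i * 7 :> rat.
    by rewrite -mulrA -exprSr -exprD subnK.
  have pow_neq0 : 7%:R ^+ i != 0 :> rat by rewrite expf_neq0.
  rewrite natrX exprSr split_k; split; last by field.
  by rewrite le_eqVlt; apply/orP; left; apply/eqP; field.
split; last by ring.
rewrite mulr0 add0r mul1r mulrAC ler_pM2r ?exprn_gt0 //.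
by rewrite ler_pdivlMr ?ltr0n // mul1r ler_nat.
Qed.

(* At most two j-items fit; for each of the three counts the integrality of [n]
   gives the bound. *)
Lemma scaled_weight_le k n c : (0 < k)%N ->
  (3 * n + c * 7 ^ k < 3 * 7 ^ k)%N -> (7 * n + 2 * c * 7 ^ k + 7 <= 7 * 7 ^ k)%N.
Proof.
move=> k_gt0; rewrite -(prednK k_gt0) expnS; move: (7 ^ k.-1)%N => q size_lt.
have : (c <= 2)%N by nia.
by case: c size_lt => [|[|[|c]]]; lia.
Qed.

Lemma prefix_weight_bound_small k : (0 < k)%N ->
  prefix_weight_bound (small_type k) (7 - 1 / 7%:R ^+ k.-1).
Proof.
move=> k_gt0 p /allP smallp sum_lt1.
set M : rat := 7%:R ^+ k.
have M_gt0 : 0 < M by rewrite exprn_gt0.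
set n := (\sum_(x <- p) size_units k x)%N; set c := (\sum_(x <- p) is_jtype x)%N.
have size_le : 3 * n%:R + c%:R * M <= 3 * M * \sum_(x <- p) isize x.
  rewrite !natr_sum !mulr_sumr mulr_suml -big_split /= !big_seq.
  by apply: ler_sum => x /smallp /small_type_scaled[].
have weight_eq : M * \sum_(x <- p) iweight x = 7 * n%:R + 2 * c%:R * M.
  rewrite !natr_sum !mulr_sumr mulr_suml -big_split /=.
  by apply: eq_big_seq => x /smallp /small_type_scaled[].
have : (3 * n + c * 7 ^ k < 3 * 7 ^ k)%N.
  have : 3 * M * \sum_(x <- p) isize x < 3 * M.
    by rewrite -[X in _ < X]mulr1 ltr_pM2l ?mulr_gt0.
  by rewrite -(ltr_nat rat) !natrD !natrM natrX -/M; lra.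
move/(scaled_weight_le _ _ _ k_gt0); rewrite -(ler_nat rat) !natrD !natrM natrX -/M.
have -> : 7 - 1 / 7%:R ^+ k.-1 = (7 * M - 7) / M.
  by rewrite /M -(prednK k_gt0) exprS /=; field; rewrite expf_neq0.
by move=> scaled_le; rewrite ler_pdivlMr // mulrC weight_eq; lra.
Qed.

Lemma is_max_weight_TJ N tl m : (0 < m)%N -> TJ m \in tl ->
  all (jtype m) (not_earlier tl (TJ m)) ->
  is_max_weight (sevens N ++ tl) (TJ m) (2 * m)%:R.
Proof.
move=> m_gt0 m_in /allP jtype_tl.
have -> : (2 * m)%:R = (2 * m.-1)%:R + 2 :> rat.
  by rewrite -{1}(prednK m_gt0) mulnS natrD addrC.
apply: (is_max_weight_from_bound (jtype m) _ (rcons (nseq m.-1 (TJ m)) (TJ m))).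
- split; last first.
    apply: feasible_rcons_nseq => //=.
    by rewrite mul1r ltr_pdivrMr ?ltr0n // mul1r ltr_nat prednK.
  rewrite not_earlier_sevens_TJ all_rcons all_nseq mem_not_earlier_self //.
  by rewrite orbT.
- by rewrite bin_weight_rcons_nseq natrM /=; lra.
- by rewrite not_earlier_sevens_TJ.
- exact: prefix_weight_bound_jtype.
Qed.

Lemma is_max_weight_T7 N tl k : (0 < k <= N)%N -> TJ 2 \in tl ->
  all (jtype 3) tl ->
  is_max_weight (sevens N ++ tl) (T7 k) (9 - 1 / 7%:R ^+ k.-1).
Proof.
move=> /andP[k_gt0 k_le_N] two_in jtype_tl.
have -> : 9 - 1 / 7%:R ^+ k.-1 = (7 - 1 / 7%:R ^+ k.-1) + 2 :> rat by ring.
have small_sevens : all (small_type k) (sevens k).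
  by rewrite all_map; apply/allP => i; rewrite mem_iota /=; lia.
apply: (is_max_weight_from_bound (small_type k) _
          (rcons (nseq (7 ^ k).-1 (T7 k)) (TJ 2))).
- split; last first.
    apply: feasible_rcons_nseq => /=.
      rewrite !index_cat mem_sevens k_gt0 k_le_N (negbTE (TJ_notin_sevens N 2)).
      by rewrite (leq_trans (ltnW _) (leq_addr _ _)) // index_mem mem_sevens k_gt0.
    rewrite -subn1 natrB ?expn_gt0 // natrX mul1r ltr_pdivrMr ?exprn_gt0 //.
    by rewrite mul1r gtrDl oppr_lt0.
  rewrite not_earlier_sevens_T7 ?k_gt0 // all_rcons all_nseq !mem_cat two_in orbT /=.
  by rewrite mem_sevens k_gt0 leqnn orbT.
- rewrite bin_weight_rcons_nseq /= -subn1 natrB ?expn_gt0 // natrX.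
  by rewrite -(prednK k_gt0) exprS /=; field; rewrite expf_neq0.
- rewrite not_earlier_sevens_T7 ?k_gt0 //; apply/allP.
  by rewrite all_cat small_sevens; apply: sub_all jtype_tl => -[].
- exact: prefix_weight_bound_small.
Qed.

Theorem mainTheorem12 (N : nat) (HN : (3 <= N)%N) :
  [/\ is_max_weight (order1 N) (TJ 1) 2,
      is_max_weight (order1 N) (TJ 2) 4 /\ is_max_weight (order2 N) (TJ 2) 4,
      is_max_weight (order1 N) (TJ 3) 6 /\ is_max_weight (order2 N) (TJ 3) 6
    & forall k : nat, (1 <= k <= N)%N ->
        is_max_weight (order1 N) (T7 k) (9 - 1 / 7%:R ^+ k.-1) /\
        is_max_weight (order2 N) (T7 k) (9 - 1 / 7%:R ^+ k.-1)].
Proof.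
rewrite /order1 /order2 -/(sevens N); split.
- exact: (is_max_weight_TJ N _ 1).
- by split; apply: (is_max_weight_TJ N _ 2).
- by split; apply: (is_max_weight_TJ N _ 3).
- by move=> k k_range; split; apply: is_max_weight_T7.
Qed.
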